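(* Let $G$ be a rooted graph. For any integers $k,g\ge 0$ and $m,h\ge 1$, \begin{align*} X_{S_h^{gk}(G,\,K_m)}&=(m-1)!\Bigg(\sum_{z=0}^{m-1}e_z\,X_{G^{g+h+k+m-z-1}}-\sum_{z=1}^{m-1}\frac{X_{K_z^h}}{(z-1)!}\,X_{G^{g+k+m-z-1}}\Bigg)\\ &\qquad+\sum_{z=0}^{k-1}\Big(X_{K_m^{z}}\,X_{G^{g+h+k-z-1}}-X_{K_m^{h+z}}\,X_{G^{g+k-z-1}}\Big). \end{align*}
   Context: All graphs are finite simple graphs. The chromatic symmetric function of a graph $G$ is $X_G=\sum_{\kappa}\prod_{v\in V(G)}x_{\kappa(v)}$, where $\kappa$ ranges over proper colorings $\kappa:V(G)\to\{1,2,\dots\}$; $e_z$ is the $z$-th elementary symmetric function, $e_0=1$. For a rooted graph $G$ and $t\ge0$, $G^t$ is $G$ with a pendant path of length $t$ attached at its root; $K_s^t$ is the lollipop ($K_s$ with a pendant path of length $t$ at one vertex). $S_h^{gk}(G,K_m)$ is the graph obtained by taking a center vertex $c$ and three paths from $c$, disjoint except at $c$, of lengths $g$, $k$, $h$, identifying the far end of the first path (or $c$ if $g=0$) with the root of $G$, identifying the far end of the second path (or $c$ if $k=0$) with a vertex of a disjoint complete graph $K_m$, and leaving the third path as a pendant path ending at a leaf. *)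

From HB Require Import structures.
From mathcomp Require Import all_boot all_order all_algebra.
From mathcomp Require Import mpoly.
Set Implicit Arguments. Unset Strict Implicit. Unset Printing Implicit Defensive.
Import GRing.Theory.
Local Open Scope ring_scope.

(* A finite graph: a finite vertex type with an adjacency relation.
   Simplicity (symmetric, irreflexive) is imposed as hypotheses where needed;
   all constructions below preserve it. *)
Record graph := Graph { gV : finType; gE : rel gV }.

(* Gluing: disjoint union of G1 and G2 with vertex b of G2 identified with
   vertex a of G1 (a is kept, b is removed). *)
Definition glueV (G1 : graph) (G2 : graph) (b : gV G2) : finType :=
  (gV G1 + {x : gV G2 | x != b})%type.

Definition glueE (G1 : graph) (a : gV G1) (G2 : graph) (b : gV G2)
  (u w : glueV G1 b) : bool :=
  match u, w with
  | inl x, inl y => gE x y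
  | inr x, inr y => gE (val x) (val y)
  | inl x, inr y => (x == a) && gE b (val y)
  | inr x, inl y => (y == a) && gE (val x) b
  end.

Definition glue (G1 : graph) (a : gV G1) (G2 : graph) (b : gV G2) : graph :=
  @Graph (glueV G1 b) (@glueE G1 a G2 b).

Definition glue_in2 (G1 : graph) (a : gV G1) (G2 : graph) (b : gV G2)
  (v : gV G2) : gV (glue a b) :=
  match insub v : option {x : gV G2 | x != b} with
  | Some x => inr x
  | None => inl a
  end.

(* The path with t edges, on vertices 0..t. *)
Definition path_graph (t : nat) : graph :=
  @Graph 'I_t.+1 (fun i j => (i.+1 == j :> nat) || (j.+1 == i :> nat)).

Definition complete (s : nat) : graph := @Graph 'I_s (fun i j => i != j).

Definition pendant (G : graph) (r : gV G) (t : nat) : graph :=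
  glue r (ord0 : gV (path_graph t)).

(* Lollipop K_s^t (for s >= 1): K_s with a pendant path of length t at a
   vertex.  (K_s is written 'I_s.-1.+1 so that it has a vertex; equal to K_s
   for s >= 1, the only case used.) *)
Definition lollipop (s t : nat) : graph :=
  pendant (ord0 : gV (complete s.-1.+1)) t.

Definition tripod1 (g k : nat) : graph :=
  glue (ord0 : gV (path_graph g)) (ord0 : gV (path_graph k)).
Definition tripod (g k h : nat) : graph :=
  glue (inl ord0 : gV (tripod1 g k)) (ord0 : gV (path_graph h)).
Definition tri_gend (g k h : nat) : gV (tripod g k h) :=
  inl (inl ord_max).
Definition tri_kend (g k h : nat) : gV (tripod g k h) :=
  inl (glue_in2 (ord0 : gV (path_graph g)) (ord0 : gV (path_graph k)) ord_max).

Definition Sgraph1 (G : graph) (r : gV G) (g k h : nat) : graph :=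
  glue r (tri_gend g k h).

Definition Sgraph (G : graph) (r : gV G) (g k h m : nat) : graph :=
  glue (glue_in2 r (tri_gend g k h) (tri_kend g k h))
       (ord0 : gV (complete m.-1.+1)).

Definition proper (G : graph) (n : nat) (f : {ffun gV G -> 'I_n}) : bool :=
  [forall u, forall v, gE u v ==> (f u != f v)].

(* Chromatic symmetric function X_G, specialized to n variables x_0..x_{n-1}
   (colours >= n set to 0).  Equality of symmetric functions is equality of
   these specializations for every n. *)
Definition chrom (n : nat) (G : graph) : {mpoly rat[n]} :=
  \sum_(f : {ffun gV G -> 'I_n} | proper f) \prod_(v : gV G) 'X_(f v).

From Pilot Require Import Defs.
From HB Require Import structures.
From mathcomp Require Import all_boot all_order all_algebra.
From mathcomp Require Import mpoly.
From mathcomp Require Import zify ring.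
Set Implicit Arguments. Unset Strict Implicit. Unset Printing Implicit Defensive.
Import GRing.Theory Num.Theory.
Local Open Scope ring_scope.

(* Gluing two graphs at a vertex makes proper colourings factor through the cut
   vertex: weighting colour e by x_e, the glued graph has X = <R_1, R_2> :=
   sum_c x_c R_1(c) R_2(c), where R_i(c) sums over the colourings of piece i
   giving the cut vertex colour c, its own weight left out.  A path rooted at an
   end contributes P_t = T^t 1 for the transfer operator
   (T v)(c) = sum_(e <> c) x_e v(e), which is self-adjoint for <_, _>, and the
   clique K_m contributes kappa_m(c) = (m-1)! e_(m-1)(x without x_c).  Hence
   X_S = <T^g (P_h * T^k kappa_m), R_G>, X_(G^t) = <P_t, R_G> and
   X_(K_s^t) = <P_t, kappa_s>.  Two operator identities, each by induction,
   finish the proof: the discrete Leibniz rule moves P_h through T^k, leaving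
   the boundary terms <P_z, kappa_m> P_(h+k-z-1) - <P_(h+z), kappa_m> P_(k-z-1),
   and the recursion e_(j+1)(x) = e_(j+1)(x without x_c) + x_c e_j(x without x_c)
   expands P_h * e_(m-1)(x without x_c) along the e_z. *)

Section GlueVertices.
Variables (G1 G2 : graph) (a : gV G1) (b : gV G2).

Lemma glue_in2_inr (y : {v : gV G2 | v != b}) : glue_in2 a b (val y) = inr y.
Proof. by rewrite /glue_in2 valK. Qed.

Lemma glue_in2_root : glue_in2 a b b = inl a.
Proof. by rewrite /glue_in2 insubF // eqxx. Qed.

Lemma glue_in2_nonroot v : v != b -> exists y, glue_in2 a b v = inr y.
Proof. by move=> vb; exists (exist _ v vb); rewrite /glue_in2 insubT. Qed.

Lemma inl_eq_glue_in2 u v :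
  (inl u == glue_in2 a b v :> gV (glue a b)) = (u == a) && (v == b).
Proof.
rewrite /glue_in2; case: insubP => [y vb _|/negbNE-> /=]; last by rewrite andbT.
by rewrite (negbTE vb) andbF.
Qed.

Lemma eq_glue_in2 v v' : v != b ->
  (glue_in2 a b v == glue_in2 a b v' :> gV (glue a b)) = (v == v').
Proof.
move=> vb; rewrite /glue_in2 insubT /=; case: insubP => [y _ <-|/negbNE/eqP->].
  by rewrite inj_eq //; apply: inr_inj.
by rewrite (negbTE vb).
Qed.

Lemma glue_irr : irreflexive (@gE G1) -> irreflexive (@gE G2) ->
  irreflexive (@gE (glue a b)).
Proof. by move=> irr1 irr2 [u|y] /=; [apply: irr1 | apply: irr2]. Qed.

End GlueVertices.

Lemma path_irr t : irreflexive (@gE (path_graph t)).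
Proof. by move=> i; rewrite /= orbb; apply/negbTE/eqP; lia. Qed.

Lemma complete_irr s : irreflexive (@gE (complete s)).
Proof. by move=> i; rewrite /= eqxx. Qed.

Lemma tripod_irr g k h : irreflexive (@gE (tripod g k h)).
Proof. by apply: glue_irr; [apply: glue_irr|]; apply: path_irr. Qed.

Section Colourings.
Variables (R : comRingType) (n : nat).
Local Notation I := 'I_n.

Definition wchrom (H : graph) (w : gV H -> I -> R) : R :=
  \sum_(f : {ffun gV H -> I} | Defs.proper f) \prod_v w v (f v).

Definition rchrom (H : graph) (v : gV H) (c : I) (w : gV H -> I -> R) : R :=
  \sum_(f : {ffun gV H -> I} | Defs.proper f && (f v == c))
    \prod_(u | u != v) w u (f u).

Lemma proper_colP (H : graph) (f : {ffun gV H -> I}) :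
  reflect (forall u v, gE u v -> f u != f v) (Defs.proper f).
Proof.
apply: (iffP forallP) => [P u v | P u]; first by apply/implyP; move/forallP: (P u).
by apply/forallP => v; apply/implyP/P.
Qed.

Lemma eq_wchrom (H : graph) (w w' : gV H -> I -> R) :
  (forall u, w u =1 w' u) -> wchrom w = wchrom w'.
Proof. by move=> ww'; apply: eq_bigr => f _; apply: eq_bigr => u _; apply: ww'. Qed.

Lemma eq_rchrom (H : graph) (v : gV H) c (w w' : gV H -> I -> R) :
  (forall u, u != v -> w u =1 w' u) -> rchrom v c w = rchrom v c w'.
Proof. by move=> ww'; apply: eq_bigr => f _; apply: eq_bigr => u /ww'; apply. Qed.

Lemma wchrom_root (H : graph) (v : gV H) (w : gV H -> I -> R) :
  wchrom w = \sum_c w v c * rchrom v c w.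
Proof.
rewrite /wchrom (partition_big (fun f : {ffun gV H -> I} => f v) predT) //=.
apply: eq_bigr => c _; rewrite /rchrom mulr_sumr.
by apply: eq_bigr => f /andP[_ /eqP <-]; rewrite (bigD1 v).
Qed.

Lemma wchrom_pin (H : graph) (v : gV H) c (s : I -> R) (w : gV H -> I -> R) :
  wchrom (fun u e => if u == v then (e == c)%:R * s e else w u e) =
  s c * rchrom v c w.
Proof.
rewrite (wchrom_root v) (bigD1 c) //= !eqxx mul1r big1 ?addr0.
  by congr (_ * _); apply: eq_rchrom => u /negbTE->.
by move=> e /negbTE ec; rewrite ec !mul0r.
Qed.

Section Glue.
Variables (G1 G2 : graph) (a : gV G1) (b : gV G2).

Definition glue_col (f1 : {ffun gV G1 -> I}) (f2 : {ffun gV G2 -> I}) :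
  {ffun gV (glue a b) -> I} :=
  [ffun u => match u with inl u1 => f1 u1 | inr y => f2 (val y) end].

Definition split_col (f : {ffun gV (glue a b) -> I}) :=
  ([ffun u => f (inl u)], [ffun v => f (glue_in2 a b v)]).

Lemma split_colK f : glue_col (split_col f).1 (split_col f).2 = f.
Proof. by apply/ffunP => -[u|y]; rewrite !ffunE /= ?glue_in2_inr. Qed.

Lemma split_glue_col f1 f2 :
  (split_col (glue_col f1 f2) == (f1, f2)) = (f2 b == f1 a).
Proof.
apply/eqP/eqP => [[_ <-]|f12]; first by rewrite ffunE glue_in2_root /glue_col ffunE.
congr pair; apply/ffunP => v; rewrite !ffunE //.
have [->|vb] := eqVneq v b; first by rewrite glue_in2_root f12.
by rewrite -[v]/(val (exist _ v vb : {v | v != b})) glue_in2_inr.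
Qed.

Hypothesis b_irr : ~~ gE b b.

Lemma proper_glue_col f1 f2 :
  Defs.proper (glue_col f1 f2) && (f2 b == f1 a) =
  Defs.proper f1 && (Defs.proper f2 && (f2 b == f1 a)).
Proof.
have [f12|] := eqVneq (f2 b) (f1 a); last by rewrite !andbF.
rewrite !andbT; apply/idP/andP => [/proper_colP P|[/proper_colP P1 /proper_colP P2]].
  split; apply/proper_colP.
    by move=> u u' uu'; have := P (inl u) (inl u') uu'; rewrite !ffunE.
  move=> v v' vv'.
  have [vb|vb] := eqVneq v b; have [v'b|v'b] := eqVneq v' b.
  - by move: vv'; rewrite vb v'b (negbTE b_irr).
  - have := P (inl a) (inr (exist _ v' v'b)); rewrite !ffunE /= eqxx vb f12.
    by apply; rewrite /= -vb.
  - have := P (inr (exist _ v vb)) (inl a); rewrite !ffunE /= eqxx v'b f12.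
    by apply; rewrite /= -v'b.
  - by have := P (inr (exist _ v vb)) (inr (exist _ v' v'b)); rewrite !ffunE; apply.
apply/proper_colP => -[u|y] [u'|y']; rewrite !ffunE /=.
- exact: P1.
- by case/andP => /eqP-> ?; rewrite -f12; apply: P2.
- by case/andP => /eqP-> ?; rewrite -f12; apply: P2.
- exact: P2.
Qed.

Lemma wchrom_glue (w : gV (glue a b) -> I -> R) :
  wchrom w = wchrom (fun u d => w (inl u) d *
    (if u == a then rchrom b d (fun v => w (glue_in2 a b v)) else 1)).
Proof.
rewrite /wchrom (reindex_onto (fun p => glue_col p.1 p.2) split_col); last first.
  by move=> f _; apply: split_colK.
rewrite (eq_bigl (fun p => Defs.proper p.1 && (Defs.proper p.2 && (p.2 b == p.1 a))));
  last by move=> [f1 f2] /=; rewrite split_glue_col proper_glue_col.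
transitivity (\sum_(f1 : {ffun gV G1 -> I} | Defs.proper f1)
  \sum_(f2 : {ffun gV G2 -> I} | Defs.proper f2 && (f2 b == f1 a))
     \prod_u w u (glue_col f1 f2 u)); first by rewrite pair_big_dep.
apply: eq_bigr => f1 _.
rewrite big_split /= -big_mkcond big_pred1_eq /rchrom mulr_sumr.
apply: eq_bigr => f2 _; rewrite big_sumType /=; congr (_ * _).
  by apply: eq_bigr => u _; rewrite ffunE.
rewrite (big_sub (op := *%R) (predC1 b)).
by apply: eq_bigr => y _; rewrite ffunE /= glue_in2_inr.
Qed.

End Glue.

Lemma wchrom_iso (H1 H2 : graph) (phi : gV H1 -> gV H2) (psi : gV H2 -> gV H1) :
  cancel phi psi -> cancel psi phi -> (forall u v, gE (phi u) (phi v) = gE u v) ->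
  forall w : gV H2 -> I -> R, wchrom w = wchrom (fun u => w (phi u)).
Proof.
move=> phiK psiK phiE w.
rewrite /wchrom (reindex (fun f1 : {ffun gV H1 -> I} => [ffun v => f1 (psi v)])); last first.
  exists (fun f2 : {ffun gV H2 -> I} => [ffun u => f2 (phi u)]) => f _;
    by apply/ffunP => u; rewrite !ffunE ?phiK ?psiK.
apply: eq_big => f1.
  apply/proper_colP/proper_colP => P u v; first by rewrite -phiE => /P; rewrite !ffunE !phiK.
  by move=> uv; rewrite !ffunE; apply: P; rewrite -phiE !psiK.
move=> _; rewrite (reindex phi) /=; last by exists psi => u _.
by apply: eq_bigr => u _; rewrite ffunE phiK.
Qed.

Definition ffun_cons t (p : I * {ffun 'I_t -> I}) : {ffun 'I_t.+1 -> I} :=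
  [ffun i => if unlift ord0 i is Some j then p.2 j else p.1].
Definition ffun_uncons t (f : {ffun 'I_t.+1 -> I}) : I * {ffun 'I_t -> I} :=
  (f ord0, [ffun j => f (lift ord0 j)]).

Lemma ffun_consK t : cancel (@ffun_cons t) (@ffun_uncons t).
Proof.
move=> [e f]; rewrite /ffun_uncons !ffunE unlift_none; congr pair.
by apply/ffunP => j; rewrite !ffunE liftK.
Qed.

Lemma ffun_unconsK t : cancel (@ffun_uncons t) (@ffun_cons t).
Proof. by move=> f; apply/ffunP => i; rewrite !ffunE; case: unliftP => [j|] ->; rewrite ?ffunE. Qed.

Lemma ffun_cons_bij t : bijective (@ffun_cons t).
Proof. exact: Bijective (@ffun_consK t) (@ffun_unconsK t). Qed.

Lemma ffun_cons0 t p : @ffun_cons t p ord0 = p.1.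
Proof. by rewrite ffunE unlift_none. Qed.

Lemma ffun_cons_lift t p j : @ffun_cons t p (lift ord0 j) = p.2 j.
Proof. by rewrite ffunE liftK. Qed.

Lemma proper_path_cons t e (f : {ffun 'I_t.+1 -> I}) :
  Defs.proper (ffun_cons (e, f) : {ffun gV (path_graph t.+1) -> I}) =
  (e != f ord0) && Defs.proper (f : {ffun gV (path_graph t) -> I}).
Proof.
apply/proper_colP/andP => [P|[ef /proper_colP P] i j].
  split; first by have := P ord0 (lift ord0 ord0); rewrite ffun_cons0 ffun_cons_lift; apply.
  apply/proper_colP => i j ij; have := P (lift ord0 i) (lift ord0 j).
  by rewrite !ffun_cons_lift; apply; move: ij; rewrite /= /bump /=.
rewrite !ffunE /=.
case: unliftP => [i'|] ->; case: unliftP => [j'|] -> //=; rewrite /bump /=.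
- by rewrite !add1n => /P.
- move=> /eqP i0; have -> : i' = ord0 by apply/val_inj; rewrite /=; lia.
  by rewrite eq_sym.
- by case/orP => [/eqP j0|//]; have -> : j' = ord0 by apply/val_inj; rewrite /=; lia.
Qed.

Lemma wchrom_pathS t (w : gV (path_graph t.+1) -> I -> R) :
  wchrom w = wchrom (fun (i : gV (path_graph t)) d => w (lift ord0 i) d *
    (if i == ord0 then \sum_(e | e != d) w ord0 e else 1)).
Proof.
rewrite /wchrom (reindex _ (onW_bij _ (ffun_cons_bij t.+1))).
rewrite big_mkcond /= -(pair_bigA _ (fun e f =>
  if Defs.proper (ffun_cons (e, f) : {ffun gV (path_graph t.+1) -> I})
  then \prod_i w i (ffun_cons (e, f) i) else 0)) exchange_big /=.
rewrite [RHS]big_mkcond; apply: eq_bigr => f _.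
case: (boolP (Defs.proper (f : {ffun gV (path_graph t) -> I}))) => fP; last first.
  by rewrite big1 // => e _; rewrite proper_path_cons (negbTE fP) andbF.
rewrite (eq_bigr (fun e => if e != f ord0 then \prod_i w i (ffun_cons (e, f) i) else 0));
  last by move=> e _; rewrite proper_path_cons fP andbT.
rewrite -big_mkcond big_split /= -big_mkcond big_pred1_eq mulr_sumr.
apply: eq_bigr => e _; rewrite big_ord_recl ffun_cons0 mulrC; congr (_ * _).
by apply: eq_bigr => j _; rewrite ffun_cons_lift.
Qed.

Lemma rchrom_path0 c (w : gV (path_graph 0) -> I -> R) :
  rchrom (ord0 : gV (path_graph 0)) c w = 1.
Proof.
rewrite /rchrom (big_pred1 [ffun => c]) => [|f].
  by rewrite big_pred0 // => i; rewrite ord1.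
apply/andP/eqP => [[_ /eqP fc]|->]; first by apply/ffunP => i; rewrite ffunE ord1.
by split; [apply/proper_colP => i j; rewrite !ord1 | rewrite ffunE].
Qed.

Lemma wchrom_path_rev t (w : gV (path_graph t) -> I -> R) :
  wchrom w = wchrom (fun i : gV (path_graph t) => w (rev_ord i)).
Proof.
apply: wchrom_iso; try exact: rev_ordK.
move=> i j; rewrite /= !subSS; have := ltn_ord i; have := ltn_ord j => jt it.
by apply/orP/orP => -[/eqP ij|/eqP ij]; [right|left|right|left]; apply/eqP; lia.
Qed.

Lemma proper_complete t (f : {ffun 'I_t -> I}) :
  Defs.proper (f : {ffun gV (complete t) -> I}) = injectiveb f.
Proof.
apply/proper_colP/injectiveP => [P u v fuv|fI u v /= uv].
  by apply/eqP/negPn/negP => /P; rewrite fuv eqxx.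
by apply: contra uv => /eqP/fI->.
Qed.

Lemma injective_ffun_cons t e (f : {ffun 'I_t -> I}) :
  injectiveb (ffun_cons (e, f)) = (e \notin codom f) && injectiveb f.
Proof.
apply/injectiveP/andP => [fI|[ef /injectiveP fI] i j].
  split.
    apply/codomP => -[j ej].
    have := fI ord0 (lift ord0 j); rewrite ffun_cons0 ffun_cons_lift.
    by move/(_ ej)/eqP; rewrite (negbTE (neq_lift ord0 j)).
  apply/injectiveP => i j fij; apply: (@lift_inj _ ord0); apply: fI.
  by rewrite !ffun_cons_lift.
rewrite !ffunE; case: unliftP => [i'|] ->; case: unliftP => [j'|] -> //=.
- by move/fI->.
- by move=> fe; move: ef; rewrite -fe codom_f.
- by move=> ef'; move: ef; rewrite ef' codom_f.
Qed.

End Colourings.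

Section TransferOperator.
Variables (R : comRingType) (n : nat) (x : 'I_n -> R).
Local Notation I := 'I_n.
Implicit Types (u v : I -> R) (c : I).

Definition transfer v c : R := \sum_(e | e != c) x e * v e.
Definition transfer_iter t v := iter t transfer v.
Definition pathvec t := transfer_iter t (fun _ => 1).
Definition xsum v := \sum_e x e * v e.
Definition xdot u v := \sum_e x e * u e * v e.
Definition elem_sym j := \sum_(S : {set I} | #|S| == j) \prod_(i in S) x i.
Definition elem_sym_skip j c :=
  \sum_(S : {set I} | (#|S| == j) && (c \notin S)) \prod_(i in S) x i.
Definition cliquevec m c := (m.-1)`!%:R * elem_sym_skip m.-1 c.

Lemma transfer_iterS t v : transfer_iter t.+1 v = transfer (transfer_iter t v).
Proof. by []. Qed.

Lemma transfer_iterSr t v : transfer_iter t.+1 v = transfer_iter t (transfer v).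
Proof. exact: iterSr. Qed.

Lemma transfer_iterD a b v :
  transfer_iter (a + b) v = transfer_iter a (transfer_iter b v).
Proof. exact: iterD. Qed.

Lemma transfer_iter_pathvec a b : transfer_iter a (pathvec b) = pathvec (a + b).
Proof. by rewrite /pathvec transfer_iterD. Qed.

Lemma eq_transfer u v : u =1 v -> transfer u =1 transfer v.
Proof. by move=> uv c; apply: eq_bigr => e _; rewrite uv. Qed.

Lemma eq_transfer_iter t u v : u =1 v -> transfer_iter t u =1 transfer_iter t v.
Proof. by elim: t => [//|t IH] uv; apply/eq_transfer/IH. Qed.

Lemma transfer_iter_sum t (J : Type) (s : seq J) (P : pred J) (F : J -> I -> R) c :
  transfer_iter t (fun d => \sum_(i <- s | P i) F i d) c =
  \sum_(i <- s | P i) transfer_iter t (F i) c.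
Proof.
elim: t c => [//|t IH] c; rewrite transfer_iterS (eq_transfer IH) /transfer.
under eq_bigr do rewrite mulr_sumr.
exact: exchange_big.
Qed.

Lemma transfer_iter_scale t (a : R) v c :
  transfer_iter t (fun d => a * v d) c = a * transfer_iter t v c.
Proof.
elim: t c => [//|t IH] c; rewrite !transfer_iterS (eq_transfer IH) /transfer mulr_sumr.
by apply: eq_bigr => e _; rewrite mulrCA.
Qed.

Lemma transfer_iter_add t u v c :
  transfer_iter t (fun d => u d + v d) c = transfer_iter t u c + transfer_iter t v c.
Proof.
elim: t c => [//|t IH] c; rewrite !transfer_iterS (eq_transfer IH) /transfer -big_split.
by apply: eq_bigr => e _; rewrite mulrDr.
Qed.

Lemma transfer_iter_sub t u v c :
  transfer_iter t (fun d => u d - v d) c = transfer_iter t u c - transfer_iter t v c.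
Proof.
elim: t c => [//|t IH] c; rewrite !transfer_iterS (eq_transfer IH) /transfer -sumrB.
by apply: eq_bigr => e _; rewrite mulrBr.
Qed.

Lemma eq_xdot u u' v v' : u =1 u' -> v =1 v' -> xdot u v = xdot u' v'.
Proof. by move=> uu' vv'; apply: eq_bigr => e _; rewrite uu' vv'. Qed.

Lemma xdotDl u v w : xdot (fun c => u c + v c) w = xdot u w + xdot v w.
Proof. by rewrite /xdot -big_split; apply: eq_bigr => e _; rewrite mulrDr mulrDl. Qed.

Lemma xdotBl u v w : xdot (fun c => u c - v c) w = xdot u w - xdot v w.
Proof. by rewrite /xdot -sumrB; apply: eq_bigr => e _; rewrite mulrBr mulrBl. Qed.

Lemma xdotZl (a : R) u w : xdot (fun c => a * u c) w = a * xdot u w.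
Proof. by rewrite /xdot mulr_sumr; apply: eq_bigr => e _; rewrite mulrCA !mulrA. Qed.

Lemma xdot_suml (J : Type) (s : seq J) (P : pred J) (F : J -> I -> R) w :
  xdot (fun c => \sum_(i <- s | P i) F i c) w = \sum_(i <- s | P i) xdot (F i) w.
Proof.
rewrite /xdot exchange_big /=; apply: eq_bigr => e _.
by rewrite mulr_sumr mulr_suml.
Qed.

Lemma xdot_cliquevec u m :
  xdot u (cliquevec m) = (m.-1)`!%:R * xdot u (elem_sym_skip m.-1).
Proof. by rewrite /xdot mulr_sumr; apply: eq_bigr => e _; rewrite mulrCA. Qed.

Lemma xsumM u v : xsum (fun d => u d * v d) = xdot u v.
Proof. by apply: eq_bigr => e _; rewrite mulrA. Qed.

Lemma xdot_transfer u v : xdot u (transfer v) = xdot (transfer u) v.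
Proof.
rewrite /xdot /transfer.
under eq_bigr do rewrite mulr_sumr.
under [RHS]eq_bigr do rewrite mulrAC mulr_sumr.
rewrite (exchange_big_dep xpredT) //=; apply: eq_bigr => e _.
by apply: eq_big => [d|d _]; [rewrite eq_sym | ring].
Qed.

Lemma xdot_transfer_iter t u v :
  xdot u (transfer_iter t v) = xdot (transfer_iter t u) v.
Proof.
by elim: t u => [//|t IH] u; rewrite transfer_iterS xdot_transfer IH transfer_iterSr.
Qed.

Lemma transferE v c : transfer v c = xsum v - x c * v c.
Proof. by rewrite /xsum (bigD1 c) //= addrAC subrr add0r. Qed.

Lemma mul_transfer (a v : I -> R) c :
  a c * transfer v c =
  transfer (fun d => a d * v d) c + xsum v * a c - xsum (fun d => a d * v d).
Proof. by rewrite !transferE; ring. Qed.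

Lemma elem_sym0 : elem_sym 0 = 1.
Proof. by rewrite /elem_sym (big_pred1 set0) ?big_set0 // => S; rewrite /= cards_eq0. Qed.

Lemma elem_sym_skip0 c : elem_sym_skip 0 c = 1.
Proof.
rewrite /elem_sym_skip (big_pred1 set0) ?big_set0 // => S /=.
by rewrite cards_eq0; case: eqP => // ->; rewrite in_set0.
Qed.

Lemma elem_sym_split j c : elem_sym j.+1 = elem_sym_skip j.+1 c + x c * elem_sym_skip j c.
Proof.
rewrite /elem_sym (bigID (fun S : {set I} => c \in S)) /= addrC; congr (_ + _).
rewrite /elem_sym_skip mulr_sumr.
rewrite (reindex_onto (fun S => c |: S) (fun S => S :\ c)); last first.
  by move=> S /andP[_ cS]; rewrite setD1K.
have setU1D1 S : ((c |: S) :\ c == S) = (c \notin S).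
  case: (boolP (c \in S)) => cS; last by rewrite setU1K // eqxx.
  by apply/negbTE/eqP => SE; move: cS; rewrite -SE !inE eqxx.
apply: eq_big => S; rewrite setU1D1; last by case/andP => _ cS; rewrite big_setU1.
case: (boolP (c \in S)) => cS /=; first by rewrite !andbF.
by rewrite cardsU1 cS setU11 /= add1n eqSS !andbT.
Qed.

Lemma mul_elem_sym_skip (a : I -> R) j c :
  a c * elem_sym_skip j c =
  \sum_(0 <= z < j.+1) elem_sym z * transfer_iter (j - z) a c
  - \sum_(1 <= z < j.+1) xdot a (elem_sym_skip z.-1) * pathvec (j - z) c.
Proof.
elim: j c => [|j IH] c.
  by rewrite elem_sym_skip0 mulr1 big_nat1 big_geq // elem_sym0 mul1r subr0.
have skipE : elem_sym_skip j.+1 c = elem_sym j.+1 - x c * elem_sym_skip j c.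
  by rewrite (elem_sym_split j c) addrK.
have shiftE : transfer_iter 1 (fun d => a d * elem_sym_skip j d) c =
    \sum_(0 <= z < j.+1) elem_sym z * transfer_iter (j.+1 - z) a c
    - \sum_(1 <= z < j.+1) xdot a (elem_sym_skip z.-1) * pathvec (j.+1 - z) c.
  rewrite (eq_transfer_iter 1 IH) transfer_iter_sub !transfer_iter_sum.
  congr (_ - _); apply: eq_big_nat => z /andP[_ zj].
    by rewrite transfer_iter_scale -transfer_iterD add1n subSn.
  by rewrite transfer_iter_scale transfer_iter_pathvec add1n subSn.
have leibniz : x c * (a c * elem_sym_skip j c) =
    xdot a (elem_sym_skip j) - transfer_iter 1 (fun d => a d * elem_sym_skip j d) c.
  by rewrite -xsumM /= transferE; ring.
rewrite skipE mulrBr mulrCA leibniz shiftE.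
rewrite (big_nat_recr j.+1) //= (big_nat_recr j.+1) //= subnn /pathvec /=.
ring.
Qed.

Lemma pathvec_mul_transfer_iter (p : I -> R) h k c :
  pathvec h c * transfer_iter k p c =
  transfer_iter k (fun d => pathvec h d * p d) c
  + \sum_(0 <= z < k) (xdot (pathvec z) p * pathvec (h + k - z - 1) c
                       - xdot (pathvec (h + z)) p * pathvec (k - z - 1) c).
Proof.
elim: k c => [|k IH] c; first by rewrite big_geq // addr0.
have xsum_iter : xsum (transfer_iter k p) = xdot (pathvec k) p.
  transitivity (xdot (fun _ => 1) (transfer_iter k p)); last exact: xdot_transfer_iter.
  by apply: eq_bigr => e _; rewrite mulr1.
have xsum_mul_iter :
    xsum (fun d => pathvec h d * transfer_iter k p d) = xdot (pathvec (h + k)) p.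
  by rewrite xsumM xdot_transfer_iter transfer_iter_pathvec addnC.
rewrite transfer_iterS mul_transfer (eq_transfer IH) xsum_iter xsum_mul_iter.
rewrite -[transfer _ c]/(transfer_iter 1 _ c) transfer_iter_add transfer_iter_sum.
rewrite (big_nat_recr k) //= (_ : (h + k.+1 - k - 1 = h)%N); last by lia.
rewrite (_ : (k.+1 - k - 1 = 0)%N); last by lia.
rewrite [in RHS](eq_big_nat _ _ (F2 := fun z => transfer_iter 1 (fun d =>
    xdot (pathvec z) p * pathvec (h + k - z - 1) d
    - xdot (pathvec (h + z)) p * pathvec (k - z - 1) d) c)); last first.
  move=> z /andP[_ zk]; rewrite transfer_iter_sub !transfer_iter_scale.
  by rewrite !transfer_iter_pathvec; congr (_ * pathvec _ _ - _ * pathvec _ _); lia.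
rewrite /pathvec /=; ring.
Qed.

Lemma transfer_iter_tripod_expansion g k h m c : (0 < m)%N ->
  transfer_iter g (fun d => pathvec h d * transfer_iter k (cliquevec m) d) c =
  (m.-1)`!%:R *
    (\sum_(0 <= z < m) elem_sym z * pathvec (g + h + k + m - z - 1) c
     - \sum_(1 <= z < m) xdot (pathvec h) (elem_sym_skip z.-1) * pathvec (g + k + m - z - 1) c)
  + \sum_(0 <= z < k)
      (xdot (pathvec z) (cliquevec m) * pathvec (g + h + k - z - 1) c
       - xdot (pathvec (h + z)) (cliquevec m) * pathvec (g + k - z - 1) c).
Proof.
case: m => [//|j] _.
rewrite (eq_transfer_iter g (pathvec_mul_transfer_iter _ h k)).
rewrite transfer_iter_add transfer_iter_sum -transfer_iterD.
have cliqueE d :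
    pathvec h d * cliquevec j.+1 d = j`!%:R * (pathvec h d * elem_sym_skip j d).
  exact: mulrCA.
rewrite (eq_transfer_iter _ cliqueE) transfer_iter_scale.
rewrite (eq_transfer_iter _ (mul_elem_sym_skip (pathvec h) j)).
rewrite transfer_iter_sub !transfer_iter_sum.
congr (_ * (_ - _) + _); apply: eq_big_nat => z /andP[_ zlt].
- rewrite transfer_iter_scale !transfer_iter_pathvec.
  by congr (_ * pathvec _ _); lia.
- rewrite transfer_iter_scale transfer_iter_pathvec.
  by congr (_ * pathvec _ _); lia.
- rewrite transfer_iter_sub !transfer_iter_scale !transfer_iter_pathvec.
  by congr (_ * pathvec _ _ - _ * pathvec _ _); lia.
Qed.

End TransferOperator.

Section ColouredGraphs.
Variables (R : comRingType) (n : nat) (x : 'I_n -> R).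
Local Notation I := 'I_n.

Definition xchrom (H : graph) : R := wchrom (fun (_ : gV H) e => x e).
Definition xrchrom (H : graph) (v : gV H) c : R := rchrom v c (fun _ e => x e).
Definition mark (H : graph) (v : gV H) (p : I -> R) : gV H -> I -> R :=
  fun u e => x e * (if u == v then p e else 1).
(* The leading factor restores [p] when [v] is the root, whose own weight
   [rchrom] leaves out. *)
Definition mrchrom (H : graph) (root v : gV H) (p : I -> R) c : R :=
  (if v == root then p c else 1) * rchrom root c (mark v p).

Lemma mrchrom_wchrom (H : graph) (root v : gV H) p c :
  mrchrom root v p c = wchrom (fun u e =>
    (if u == root then (e == c)%:R else x e) * (if u == v then p e else 1)).
Proof.
rewrite /mrchrom -(wchrom_pin root c (fun e => if v == root then p e else 1)).
by apply: eq_wchrom => u e; have [->|//] := eqVneq u root; rewrite [v == _]eq_sym.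
Qed.

Lemma wchrom_mark (H : graph) (v : gV H) p : wchrom (mark v p) = xdot x p (xrchrom v).
Proof.
rewrite (wchrom_root v); apply: eq_bigr => c _; rewrite {1}/mark eqxx.
by congr (_ * _); apply: eq_rchrom => u /negbTE uv e; rewrite /mark uv mulr1.
Qed.

Lemma xchrom_glue (G1 G2 : graph) (a : gV G1) (b : gV G2) :
  ~~ gE b b -> xchrom (glue a b) = wchrom (mark a (xrchrom b)).
Proof. by move=> bb; rewrite /xchrom wchrom_glue. Qed.

Lemma wchrom_glue_mark (G1 G2 : graph) (a : gV G1) (b v : gV G2) p :
  ~~ gE b b -> wchrom (mark (glue_in2 a b v) p) = wchrom (mark a (mrchrom b v p)).
Proof.
move=> bb; rewrite wchrom_glue //; apply: eq_wchrom => u e.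
rewrite /mark /mrchrom inl_eq_glue_in2.
case: (u == a); last by rewrite !mulr1.
rewrite /= -mulrA; congr (_ * (_ * _)); apply: eq_rchrom => v' v'b d.
by rewrite eq_glue_in2.
Qed.

Lemma wchrom_path t (al be : I -> R) :
  wchrom (fun (i : gV (path_graph t)) e =>
    (if i == ord0 then al e else x e) * (if i == ord_max then be e else 1)) =
  \sum_c al c * transfer_iter x t be c.
Proof.
elim: t al => [|t IH] al.
  rewrite (wchrom_root (ord0 : gV (path_graph 0))).
  by apply: eq_bigr => c _; rewrite rchrom_path0 mulr1.
rewrite wchrom_pathS.
rewrite (eq_wchrom (w' := fun (i : gV (path_graph t)) e =>
    (if i == ord0 then x e * \sum_(d | d != e) al d else x e) *
    (if i == ord_max then be e else 1))); last first.
  move=> i e; rewrite (_ : (lift ord0 i == ord_max) = (i == ord_max)); last first.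
    by rewrite -!val_eqE /= /bump /= add1n eqSS.
  have [->|_] := eqVneq i ord0; last by rewrite mulr1.
  by rewrite mulrAC; congr (_ * _ * _); apply: eq_bigr => d _; rewrite mulr1.
rewrite IH (eq_bigr (fun c => \sum_(d | d != c) x c * al d * transfer_iter x t be c));
  last by move=> c _; rewrite mulr_sumr mulr_suml; apply: eq_bigr => d _; ring.
rewrite (exchange_big_dep xpredT) //=; apply: eq_bigr => d _.
rewrite /transfer mulr_sumr; apply: eq_big => [c|c _]; first by rewrite eq_sym.
ring.
Qed.

Lemma mrchrom_path t p c :
  mrchrom (ord0 : gV (path_graph t)) ord_max p c = transfer_iter x t p c.
Proof.
rewrite mrchrom_wchrom wchrom_path (bigD1 c) //= eqxx mul1r big1 ?addr0 //.
by move=> d /negbTE->; rewrite mul0r.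
Qed.

Lemma mrchrom_path_rev t p c :
  mrchrom (ord_max : gV (path_graph t)) ord0 p c = transfer_iter x t p c.
Proof.
rewrite -mrchrom_path !mrchrom_wchrom wchrom_path_rev; apply: eq_wchrom => i e.
have rev_eq (j : 'I_t.+1) : (rev_ord i == j) = (i == rev_ord j).
  by apply/eqP/eqP => [<-|->]; rewrite rev_ordK.
have rev_max : rev_ord ord_max = ord0 :> 'I_t.+1 by apply/val_inj; rewrite /= subnn.
have rev_0 : rev_ord ord0 = ord_max :> 'I_t.+1 by apply/val_inj; rewrite /= subn1.
by rewrite !rev_eq rev_max rev_0.
Qed.

Lemma xrchrom_path t c : xrchrom (ord0 : gV (path_graph t)) c = pathvec x t c.
Proof.
rewrite /pathvec -mrchrom_path /mrchrom if_same mul1r.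
by apply: eq_rchrom => i _ e; rewrite /mark if_same mulr1.
Qed.

Lemma xrchrom_complete_injective k c :
  xrchrom (ord0 : gV (complete k.+1)) c =
  \sum_(f : {ffun 'I_k -> I} | injectiveb f && (c \notin codom f)) \prod_j x (f j).
Proof.
rewrite /xrchrom /rchrom (reindex _ (onW_bij _ (ffun_cons_bij _ k))).
rewrite (eq_bigl (fun p : I * {ffun 'I_k -> I} =>
  (p.1 == c) && (injectiveb p.2 && (c \notin codom p.2)))); last first.
  move=> [e f] /=; rewrite proper_complete injective_ffun_cons ffun_cons0 /=.
  by case: eqP => [->|]; rewrite ?andbF // andbT andbC.
transitivity (\sum_(e | e == c)
  \sum_(f : {ffun 'I_k -> I} | injectiveb f && (c \notin codom f))
    \prod_(u | u != ord0) x (ffun_cons (e, f) u)); first by rewrite pair_big_dep.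
rewrite big_pred1_eq.
apply: eq_bigr => f _; rewrite big_mkcond big_ord_recl /= mul1r.
by apply: eq_bigr => j _; rewrite ffun_cons_lift.
Qed.

Lemma sum_injective_prod k c :
  \sum_(f : {ffun 'I_k -> I} | injectiveb f && (c \notin codom f)) \prod_j x (f j) =
  k`!%:R * elem_sym_skip x k c.
Proof.
rewrite (partition_big (fun f : {ffun 'I_k -> I} => f @: setT)
           (fun S : {set I} => (#|S| == k) && (c \notin S))); last first.
  move=> f /andP[/injectiveP fI cf]; rewrite card_imset // cardsT card_ord eqxx /=.
  by apply/imsetP => -[j _ cE]; move: cf; rewrite cE codom_f.
rewrite /elem_sym_skip mulr_sumr; apply: eq_bigr => S /andP[/eqP Sk cS].
rewrite [LHS](eq_bigr (fun _ => \prod_(i in S) x i)); last first.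
  move=> f /andP[/andP[/injectiveP fI _] /eqP <-].
  by rewrite big_imset /=; [apply: eq_bigl => j; rewrite in_setT | move=> i j _ _; apply: fI].
rewrite [LHS](eq_bigl (fun f => f \in [set f in ffun_on S | injectiveb f])); last first.
  move=> f; rewrite inE; apply/andP/andP => [[/andP[fI _] /eqP <-]|[/ffun_onP fS fI]].
    by split=> //; apply/ffun_onP => i; apply: imset_f.
  have fT : f @: setT = S.
    apply/eqP; rewrite eqEcard; apply/andP; split.
      by apply/subsetP => _ /imsetP [i _ ->]; apply: fS.
    by rewrite card_imset; [rewrite cardsT card_ord Sk | apply/injectiveP].
  split; last by rewrite fT.
  rewrite fI /=; apply/negP => /codomP [i ci]; move: cS; rewrite ci.
  by move/negP; apply; apply: fS.
by rewrite sumr_const card_inj_ffuns_on card_ord Sk ffactnn mulr_natl.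
Qed.

Lemma xrchrom_complete m c :
  xrchrom (ord0 : gV (complete m.-1.+1)) c = cliquevec x m c.
Proof. by rewrite xrchrom_complete_injective sum_injective_prod. Qed.

Lemma wchrom_glue_path (G : graph) (a : gV G) t
    (w : gV (glue a (ord0 : gV (path_graph t))) -> I -> R) :
  (forall y, w (inr y) =1 x) ->
  wchrom w = wchrom (fun u e => w (inl u) e * (if u == a then pathvec x t e else 1)).
Proof.
move=> wx; rewrite wchrom_glue ?path_irr //; apply: eq_wchrom => u e.
case: (u == a) => //; congr (_ * _); rewrite -xrchrom_path; apply: eq_rchrom => v v0 d.
by have [y ->] := glue_in2_nonroot a v0; apply: wx.
Qed.

Lemma mrchrom_tripod g k h p c :
  mrchrom (tri_gend g k h) (tri_kend g k h) p c =
  transfer_iter x g (fun d => pathvec x h d * transfer_iter x k p d) c.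
Proof.
rewrite mrchrom_wchrom /tripod wchrom_glue_path; last by move=> y e; rewrite mulr1.
rewrite /tripod1 wchrom_glue ?path_irr // -mrchrom_path_rev mrchrom_wchrom.
apply: eq_wchrom => i e.
rewrite (eq_rchrom e (w' := mark (ord_max : gV (path_graph k)) p)); last first.
  move=> v v0 d; rewrite !(inj_eq inl_inj) ![glue_in2 _ _ v == inl _]eq_sym.
  by rewrite !inl_eq_glue_in2 eq_glue_in2 // (negbTE v0) !andbF mulr1.
rewrite !(inj_eq inl_inj) inl_eq_glue_in2.
have [->|i0] := eqVneq i ord0; last by rewrite !mulr1.
by rewrite -mrchrom_path /mrchrom /=; ring.
Qed.

Lemma xchrom_pendant (G : graph) (r : gV G) t :
  xchrom (pendant r t) = xdot x (pathvec x t) (xrchrom r).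
Proof.
rewrite /pendant xchrom_glue ?path_irr // wchrom_mark.
by apply: eq_xdot => // c; apply: xrchrom_path.
Qed.

Lemma xchrom_lollipop s t :
  xchrom (lollipop s t) = xdot x (pathvec x t) (cliquevec x s).
Proof.
rewrite /lollipop /pendant xchrom_glue ?path_irr // wchrom_mark.
by apply: eq_xdot => c; [apply: xrchrom_path | apply: xrchrom_complete].
Qed.

Lemma xchrom_Sgraph (G : graph) (r : gV G) g k h m :
  xchrom (Sgraph r g k h m) = xdot x (fun c =>
    transfer_iter x g (fun d => pathvec x h d * transfer_iter x k (cliquevec x m) d) c)
    (xrchrom r).
Proof.
rewrite /Sgraph xchrom_glue ?complete_irr // wchrom_glue_mark ?tripod_irr // wchrom_mark.
apply: eq_xdot => // c; rewrite mrchrom_tripod.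
apply: eq_transfer_iter => d; congr (_ * _); apply: eq_transfer_iter => e.
exact: xrchrom_complete.
Qed.

Lemma xchrom_Sgraph_expansion (G : graph) (r : gV G) g k h m : (0 < m)%N ->
  xchrom (Sgraph r g k h m) =
  (m.-1)`!%:R *
    (\sum_(0 <= z < m) elem_sym x z * xchrom (pendant r (g + h + k + m - z - 1))
     - \sum_(1 <= z < m) xdot x (pathvec x h) (elem_sym_skip x z.-1)
                          * xchrom (pendant r (g + k + m - z - 1)))
  + \sum_(0 <= z < k)
      (xchrom (lollipop m z) * xchrom (pendant r (g + h + k - z - 1))
       - xchrom (lollipop m (h + z)) * xchrom (pendant r (g + k - z - 1))).
Proof.
move=> m_gt0; rewrite xchrom_Sgraph.
rewrite (eq_xdot x (fun c => transfer_iter_tripod_expansion x g k h c m_gt0) (frefl _)).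
rewrite xdotDl xdotZl xdotBl !xdot_suml.
congr (_ * (_ - _) + _); apply: eq_bigr => z _.
- by rewrite xdotZl xchrom_pendant.
- by rewrite xdotZl xchrom_pendant.
- by rewrite xdotBl !xdotZl !xchrom_lollipop !xchrom_pendant.
Qed.

End ColouredGraphs.

Lemma scale_inv_natr_mul (F : fieldType) (A : lalgType F) k (p : A) :
  k%:R != 0 :> F -> (k%:R : F)^-1 *: (k%:R * p) = p.
Proof. by move=> k0; rewrite mulr_natl -scaler_nat scalerA mulVf // scale1r. Qed.

Theorem corollary4p6 (G : graph) (r : gV G)
  (HGsym : ssrbool.symmetric (@gE G)) (HGirr : irreflexive (@gE G))
  (g k m h : nat) (Hm : (1 <= m)%N) (Hh : (1 <= h)%N) (n : nat) :
  chrom n (Sgraph r g k h m) =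
    (m.-1)`!%:R *
      (\sum_(0 <= z < m)
          mesym n rat z * chrom n (pendant r (g + h + k + m - z - 1))
       - \sum_(1 <= z < m)
          ((z.-1)`!%:R : rat)^-1 *:
            (chrom n (lollipop z h) * chrom n (pendant r (g + k + m - z - 1))))
    + \sum_(0 <= z < k)
        (chrom n (lollipop m z) * chrom n (pendant r (g + h + k - z - 1))
         - chrom n (lollipop m (h + z)) * chrom n (pendant r (g + k - z - 1))).
Proof.
pose X i : {mpoly rat[n]} := 'X_i.
have chromE H : chrom n H = xchrom X H by [].
rewrite chromE (xchrom_Sgraph_expansion X r g k h Hm).
congr (_ * (_ - _) + _); apply: eq_bigr => z _.
rewrite !chromE xchrom_lollipop xdot_cliquevec -mulrA scale_inv_natr_mul //.
by rewrite pnatr_eq0 -lt0n fact_gt0.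
Qed.
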